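(* Let $\Gamma$ be a weighted digraph with vertex set $V=\{1,\dots,n\}$ and arc set $E$, out-forest dimension $d$ and normalized matrix of maximum out-forests $\bar J$. Let $K$ be the vertex set of a basis bicomponent of $\Gamma$; let $K^+$ be the set of vertices reachable by directed paths from $K$ and unreachable from all other basis bicomponents; let $\widetilde K$ be the union of the vertex sets of all basis bicomponents. Let $\mathsf T$ be the set of spanning diverging trees of the restriction $\Gamma_K$ of $\Gamma$ to $K$, and $\mathsf T^j\subseteq\mathsf T$ those diverging from (rooted at) $j$. Let $\Gamma_{-K}$ be the spanning subgraph of $\Gamma$ with arc set $E\setminus E(\Gamma_K)$, and $\mathsf P^{K\to i}$ the set of maximum out-forests of $\Gamma_{-K}$ in which $i$ is reachable from some vertex of $K$. Let $\varepsilon(\cdot)$ denote the weight of a set of subgraphs (sum of weights of its elements) and $\sigma_{n-d}$ the total weight of the maximum out-forests of $\Gamma$. Then: (1) $\bar J$ is row stochastic: $\bar J_{ij}\ge0$ for all $i,j$ and $\sum_{k=1}^n\bar J_{ik}=1$ for all $i$; (2) $\bar J_{ij}\ne0$ if and only if $j\in\widetilde K$ and $i$ is reachable from $j$ in $\Gamma$; (3) if $j\in K$, then for every $i\in V$, $\bar J_{ij}=\varepsilon(\mathsf T^j)\,\varepsilon(\mathsf P^{K\to i})/\sigma_{n-d}$; moreover, if $i\in K^+$ then $\bar J_{ij}=\bar J_{jj}=\varepsilon(\mathsf T^j)/\varepsilon(\mathsf T)$; (4) $\sum_{j\in K}\bar J_{jj}=1$; in particular, if $j$ is an undominated vertex then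 $\bar J_{jj}=1$; (5) if $j_1,j_2\in K$, then the columns satisfy $\bar J_{\cdot j_2}=\big(\varepsilon(\mathsf T^{j_2})/\varepsilon(\mathsf T^{j_1})\big)\bar J_{\cdot j_1}$.
   Context: A weighted digraph $\Gamma$ has no loops and each arc $j\to i$ ($j\ne i$) has a positive weight. A diverging tree is a rooted directed tree with directed paths from its root to all its other vertices; an out-forest of a digraph is a spanning subgraph whose weak components are diverging trees; a maximum out-forest is one with the maximum number of arcs; the out-forest dimension $d$ is the number of trees in a maximum out-forest. The weight of a subgraph is the product of its arc weights (the empty product is $1$). The normalized matrix of maximum out-forests $\bar J$ has $\bar J_{ij}$ equal to the total weight of the maximum out-forests of $\Gamma$ in which $i$ belongs to the tree rooted at $j$, divided by the total weight of all maximum out-forests. A basis bicomponent is a strong component into which no arc enters from outside it; an undominated vertex is a vertex forming by itself a basis bicomponent. Every vertex is reachable from itself. *)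

From HB Require Import structures.
From mathcomp Require Import all_boot all_order all_algebra.
Set Implicit Arguments. Unset Strict Implicit. Unset Printing Implicit Defensive.
Import Order.TTheory GRing.Theory Num.Theory.
Local Open Scope ring_scope.

(* Vertices are 'I_n.  A (sub)digraph is given by its arc set, a set of
   ordered pairs; the pair (j, i) is the arc j -> i. *)
Section Defs.
Variable n : nat.
Local Notation V := 'I_n.
Local Notation arcs := {set V * V}.

Definition arel (F : arcs) : rel V := fun x y => (x, y) \in F.

Definition reach (F : arcs) (x y : V) : bool := connect (arel F) x y.

Definition wcomp (F : arcs) (x : V) : {set V} :=
  [set y | connect (fun a b => arel F a b || arel F b a) x y].

Definition restrict (F : arcs) (S : {set V}) : arcs :=
  [set a in F | (a.1 \in S) && (a.2 \in S)].

Definition diverging_tree (S : {set V}) (F : arcs) (r : V) : bool :=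
  [&& F \subset setX S S, (#|F|).+1 == #|S|, r \in S &
      [forall y in S, reach F r y]].

Definition out_forest (E F : arcs) : bool :=
  (F \subset E) &&
  [forall x, [exists r, diverging_tree (wcomp F x) (restrict F (wcomp F x)) r]].

Definition max_out_forest (E F : arcs) : bool :=
  out_forest E F && [forall G : arcs, out_forest E G ==> (#|G| <= #|F|)%N].

Definition in_tree_rooted (F : arcs) (i j : V) : bool :=
  (j \in wcomp F i) && [forall y in wcomp F i, reach F j y].

Variable R : realFieldType.

Definition wt (w : V -> V -> R) (F : arcs) : R := \prod_(a in F) w a.1 a.2.

Definition sigma_max (E : arcs) (w : V -> V -> R) : R :=
  \sum_(F : arcs | max_out_forest E F) wt w F.

Definition Jbar (E : arcs) (w : V -> V -> R) (i j : V) : R :=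
  (\sum_(F : arcs | max_out_forest E F && in_tree_rooted F i j) wt w F)
  / sigma_max E w.

Definition scomp (E : arcs) (v : V) : {set V} :=
  [set u | reach E u v && reach E v u].

Definition basis_bicomp (E : arcs) (K : {set V}) : bool :=
  [exists v, K == scomp E v] && [forall a in E, (a.2 \in K) ==> (a.1 \in K)].

Definition undominated (E : arcs) (j : V) : bool := basis_bicomp E [set j].

Definition Ktilde (E : arcs) : {set V} :=
  \bigcup_(K : {set V} | basis_bicomp E K) K.

Definition Kplus (E : arcs) (K : {set V}) : {set V} :=
  [set i | [exists k in K, reach E k i] &&
     [forall K' : {set V}, (basis_bicomp E K' && (K' != K)) ==>
        [forall k in K', ~~ reach E k i]]].

Definition epsT (E : arcs) (w : V -> V -> R) (K : {set V}) : R :=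
  \sum_(F : arcs | (F \subset E) && [exists r, diverging_tree K F r]) wt w F.

Definition epsTj (E : arcs) (w : V -> V -> R) (K : {set V}) (j : V) : R :=
  \sum_(F : arcs | (F \subset E) && diverging_tree K F j) wt w F.

Definition minusK (E : arcs) (K : {set V}) : arcs := E :\: restrict E K.

Definition epsP (E : arcs) (w : V -> V -> R) (K : {set V}) (i : V) : R :=
  \sum_(F : arcs | max_out_forest (minusK E K) F && [exists k in K, reach F k i])
     wt w F.

End Defs.

(* Because
   #|F| + #|roots F| = n, maximum out-forests are those with fewest roots, and
   they are exactly the out-forests whose roots reach, inside F, every vertex
   from which they are reachable in E (max_out_forestP).  A greedy spanning
   construction (grow_forest) yields such forests with any prescribed source as
   a root, so roots of maximum out-forests are exactly the vertices of basis
   bicomponents.  For a basis bicomponent K and j in K, splitting F into its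
   arcs inside K and the rest is a bijection between maximum out-forests of
   Gamma rooted at j and pairs (spanning tree of Gamma_K rooted at j, maximum
   out-forest of Gamma_{-K}) (decomp_fwd, decomp_bwd, decompP).

   Summing over this bijection factors the numerator of Jbar_ij as
   eps(T^j) eps(P^{K->i}) (Jnum_decomp); partitioning maximum out-forests by
   the tree containing i, or by their unique root in K, gives the row sums and
   sigma_{n-d} = eps(T) sigma(Gamma_{-K}) (sigma_factor). *)

From HB Require Import structures.
From mathcomp Require Import all_boot all_order all_algebra.
Set Implicit Arguments. Unset Strict Implicit. Unset Printing Implicit Defensive.
Import Order.TTheory GRing.Theory Num.Theory.

Section ConnectClosure.
Variable T : finType.
Implicit Types (e : rel T) (A : {set T}).

Lemma connect_fwd_closed e A x y :
  (forall u v, u \in A -> e u v -> v \in A) -> x \in A -> connect e x y -> y \in A.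
Proof.
move=> Ae xA /connectP[p + ->]; elim: p x xA => //= z p IHp x xA /andP[exz ez].
exact: IHp (Ae _ _ xA exz) ez.
Qed.

Lemma connect_bwd_closed e A x y :
  (forall u v, e u v -> v \in A -> u \in A) -> y \in A -> connect e x y -> x \in A.
Proof.
move=> Ae yA /connectP[p ep yE]; rewrite {}yE in yA.
elim: p x ep yA => //= z p IHp x /andP[exz ez] yA.
exact: Ae _ _ exz (IHp _ ez yA).
Qed.

Lemma connect_last e x y : connect e x y -> x != y -> exists2 u, connect e x u & e u y.
Proof.
move=> /connectP[p + ->]; case/lastP: p => [|p z] /=; first by rewrite eqxx.
rewrite rcons_path last_rcons => /andP[ep ez] _.
by exists (last x p) => //; apply/connectP; exists p.
Qed.

Lemma connect_cross e A x y : connect e x y -> x \notin A -> y \in A ->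
  exists u v, [/\ u \notin A, v \in A & e u v].
Proof.
move=> /connectP[p + ->]; elim: p x => /= [|z p IHp] x; first by move=> _ /negPf ->.
case/andP=> exz ez xA; case: (boolP (z \in A)) => [zA _|zA]; first by exists x, z.
exact: IHp ez zA.
Qed.

End ConnectClosure.

Section Forests.
Variable n : nat.
Local Notation V := 'I_n.
Local Notation arcs := {set V * V}.
Implicit Types (E F G T : arcs) (S : {set V}).

Definition heads F : {set V} := [set a.2 | a in F].
Definition roots F : {set V} := ~: heads F.

Definition single_parent F : Prop := {in F &, injective (fun a : V * V => a.2)}.

Definition arc_acyclic F : Prop := forall a, a \in F -> ~~ reach F a.2 a.1.

Lemma reach_refl F x : reach F x x.
Proof. exact: connect0. Qed.

Lemma reach_arc F x y : (x, y) \in F -> reach F x y.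
Proof. exact: connect1. Qed.

Lemma reach_trans F x y z : reach F x y -> reach F y z -> reach F x z.
Proof. exact: connect_trans. Qed.

Lemma reach_sub F G x y : F \subset G -> reach F x y -> reach G x y.
Proof. by move=> sFG; apply: connect_sub => a b ab; apply/connect1/(subsetP sFG). Qed.

Lemma reach_last F x y : reach F x y -> x != y -> exists2 u, reach F x u & (u, y) \in F.
Proof. exact: connect_last. Qed.

Lemma reach_cross F (A : {set V}) x y : reach F x y -> x \notin A -> y \in A ->
  exists u v, [/\ u \notin A, v \in A & (u, v) \in F].
Proof. exact: connect_cross. Qed.

Lemma reach_fwd_closed F (A : {set V}) x y :
  (forall u v, u \in A -> (u, v) \in F -> v \in A) -> x \in A -> reach F x y -> y \in A.
Proof. exact: connect_fwd_closed. Qed.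

Lemma reach_bwd_closed F (A : {set V}) x y :
  (forall u v, (u, v) \in F -> v \in A -> u \in A) -> y \in A -> reach F x y -> x \in A.
Proof. exact: connect_bwd_closed. Qed.

Lemma headsP F y : reflect (exists u, (u, y) \in F) (y \in heads F).
Proof.
apply: (iffP imsetP) => [[[u v] uv /= ->]|[u uy]]; first by exists u.
by exists (u, y).
Qed.

Lemma root_noarc F r u : r \in roots F -> (u, r) \in F = false.
Proof. by rewrite in_setC => /headsP rF; apply/negP => ur; apply: rF; exists u. Qed.

Lemma roots_sub F G r : G \subset F -> r \in roots F -> r \in roots G.
Proof.
move=> sGF; rewrite !in_setC; apply: contra => /headsP[u ur].
by apply/headsP; exists u; apply: (subsetP sGF).
Qed.

Lemma single_parent_sub F G : G \subset F -> single_parent F -> single_parent G.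
Proof. by move=> sGF uF a b /(subsetP sGF) aF /(subsetP sGF); apply: uF. Qed.

Lemma acyclic_sub F G : G \subset F -> arc_acyclic F -> arc_acyclic G.
Proof.
move=> sGF aF a aG; apply: contra (aF a (subsetP sGF a aG)); exact: reach_sub.
Qed.

Lemma card_heads F : single_parent F -> #|heads F| = #|F|.
Proof. by move=> uF; apply/eqP/imset_injP. Qed.

Lemma card_arcs_roots F : single_parent F -> #|F| + #|roots F| = n.
Proof. by move=> uF; rewrite -card_heads // cardsC card_ord. Qed.

Lemma root_reach F r x : r \in roots F -> reach F x r -> x = r.
Proof.
move=> rF xr; apply/eqP; apply: contraT => neq.
by case: (reach_last xr neq) => u _; rewrite root_noarc.
Qed.

(* In an acyclic arc set every vertex is reached from some root: walk up to
   an ancestor with the fewest ancestors. *)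
Lemma root_exists F : arc_acyclic F -> forall i, exists2 r, r \in roots F & reach F r i.
Proof.
move=> aF i; pose anc u := #|[set v | reach F v u]|.
have [u ui umin] := @arg_minnP _ i (fun u => reach F u i) anc (reach_refl F i).
exists u => //; rewrite in_setC; apply/headsP => -[p pu].
have /umin : reach F p i := reach_trans (reach_arc pu) ui.
rewrite leqNgt => /negP; apply; apply: proper_card; apply/properP; split.
  by apply/subsetP => v; rewrite !inE => vp; apply: reach_trans vp (reach_arc pu).
by exists u; rewrite inE ?reach_refl //; apply: aF pu.
Qed.

Lemma root_uniq F r1 r2 i : single_parent F -> r1 \in roots F -> r2 \in roots F ->
  reach F r1 i -> reach F r2 i -> r1 = r2.
Proof.
move=> uF r1F r2F r1i r2i; set A := [set v | reach F r1 v].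
have [|r2A] := boolP (r2 \in A); first by rewrite inE => /(root_reach r2F).
have iA : i \in A by rewrite inE.
have [u [v [uA]]] := reach_cross r2i r2A iA; rewrite inE => r1v uv.
have [r1v'|neq] := eqVneq r1 v; first by rewrite -r1v' root_noarc in uv.
have [u' r1u' u'v] := reach_last r1v neq.
by have [eu] := uF _ _ uv u'v erefl; case/negP: uA; rewrite inE eu.
Qed.

(* An arc set with single parents in which a root reaches the tail of every
   arc is acyclic: a cycle would have to be entered by an arc from outside. *)
Lemma acyclic_of_rooted F r : single_parent F -> r \in roots F ->
  (forall a, a \in F -> reach F r a.1) -> arc_acyclic F.
Proof.
move=> uF rF rtails [x y] xy /=; apply/negP => yx.
set C := [set v | reach F y v && reach F v y].
have parentC v : v \in C -> exists2 p, p \in C & (p, v) \in F.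
  rewrite inE => /andP[yv vy]; have [<-|neq] := eqVneq y v.
    by exists x => //; rewrite inE yx reach_arc.
  have [p yp pv] := reach_last yv neq.
  by exists p => //; rewrite inE yp (reach_trans (reach_arc pv) vy).
have rC : r \notin C by apply/negP => /parentC[p _]; rewrite root_noarc.
have yC : y \in C by rewrite inE reach_refl.
have ry : reach F r y := reach_trans (rtails _ xy) (reach_arc xy).
have [u [v [uC vC uv]]] := reach_cross ry rC yC.
have [p pC pv] := parentC v vC.
by have [up] := uF _ _ uv pv erefl; rewrite up pC in uC.
Qed.

Lemma diverging_tree_intro S T r : T \subset setX S S -> single_parent T ->
  r \in roots T -> r \in S -> (forall y, y \in S -> reach T r y) -> diverging_tree S T r.
Proof.
move=> sTS uT rT rS rspan; apply/and4P; split => //; last exact/forall_inP.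
have -> : S = r |: heads T.
  apply/setP => y; rewrite in_setU1; apply/idP/idP => [yS|].
    have [->|neq] := eqVneq y r; rewrite ?eqxx //=; apply/headsP.
    rewrite eq_sym in neq; have [u _ uy] := reach_last (rspan y yS) neq.
    by exists u.
  case/orP=> [/eqP ->//|/headsP[u /(subsetP sTS)]]; by rewrite in_setX => /andP[].
by rewrite cardsU1 -in_setC rT card_heads.
Qed.

Lemma diverging_tree_elim S T r : diverging_tree S T r ->
  [/\ single_parent T, heads T = S :\ r & arc_acyclic T].
Proof.
case/and4P=> sTS /eqP card_T rS /forall_inP rspan.
have cardSr : #|S :\ r| = #|T| by move: card_T; rewrite (cardsD1 r S) rS add1n => -[].
have Sr_heads : S :\ r \subset heads T.
  apply/subsetP => y; rewrite in_setD1 => /andP[neq yS].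
  rewrite eq_sym in neq; have [u _ uy] := reach_last (rspan y yS) neq.
  by apply/headsP; exists u.
have heads_card : #|heads T| <= #|S :\ r| by rewrite cardSr leq_imset_card.
have headsE : heads T = S :\ r by apply/esym/eqP; rewrite eqEcard Sr_heads.
have uT : single_parent T.
  by apply/imset_injP; rewrite -/(heads T) headsE cardSr.
split => //; apply: (acyclic_of_rooted uT (r := r)).
  by rewrite in_setC headsE in_setD1 eqxx.
move=> a /(subsetP sTS); case: a => u v; rewrite in_setX => /andP[uS _].
exact: rspan.
Qed.

Lemma in_restrict F S a : (a \in restrict F S) = [&& a \in F, a.1 \in S & a.2 \in S].
Proof. by rewrite inE. Qed.

Lemma restrict_sub F S : restrict F S \subset F.
Proof. by apply/subsetP => a; rewrite in_restrict => /andP[]. Qed.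

Lemma restrict_setUD F S : restrict F S :|: (F :\: restrict F S) = F.
Proof.
apply/setP => a; rewrite in_setU in_setD.
by case: (boolP (a \in restrict F S)) => //= /(subsetP (restrict_sub F S)) ->.
Qed.

Lemma reach_restrict F S x y :
  (forall u v, u \in S -> (u, v) \in F -> v \in S) -> x \in S ->
  reach F x y -> reach (restrict F S) x y.
Proof.
move=> Sfwd xS xy; suff : y \in [set z | (z \in S) && reach (restrict F S) x z].
  by rewrite inE => /andP[].
apply: (reach_fwd_closed _ _ xy); last by rewrite inE xS reach_refl.
move=> u v; rewrite !inE => /andP[uS xu] uv; have vS := Sfwd _ _ uS uv.
by rewrite vS (reach_trans xu) // reach_arc // in_restrict uv uS vS.
Qed.

Lemma wcomp_self F x : x \in wcomp F x.
Proof. by rewrite inE connect0. Qed.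

Lemma wcomp_fwd F x u v : u \in wcomp F x -> (u, v) \in F -> v \in wcomp F x.
Proof. by rewrite !inE => xu uv; apply: connect_trans xu (connect1 _); rewrite /arel uv. Qed.

Lemma wcomp_bwd F x u v : u \in wcomp F x -> (v, u) \in F -> v \in wcomp F x.
Proof.
by rewrite !inE => xu vu; apply: connect_trans xu (connect1 _); rewrite /arel vu orbT.
Qed.

Lemma wcomp_root F r x : single_parent F -> r \in roots F -> reach F r x ->
  wcomp F x = [set y | reach F r y].
Proof.
move=> uF rF rx; apply/setP => y; rewrite !inE; apply/idP/idP => [xy|ry].
  have : y \in [set z | reach F r z]; last by rewrite inE.
  apply: (connect_fwd_closed _ _ xy); last by rewrite inE.
  move=> u v; rewrite !inE /arel => ru /orP[uv|vu]; first exact: reach_trans ru (reach_arc uv).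
  have [ru'|neq] := eqVneq r u; first by rewrite -ru' root_noarc in vu.
  by have [p rp pu] := reach_last ru neq; have [->] := uF _ _ vu pu erefl.
have symm : connect_sym (fun a b => arel F a b || arel F b a).
  by apply: sym_connect_sym => a b; rewrite orbC.
have weak z : reach F r z -> connect (fun a b => arel F a b || arel F b a) r z.
  by apply: connect_sub => a b ab; apply: connect1; rewrite ab.
by apply: connect_trans (weak _ ry); rewrite symm weak.
Qed.

Lemma out_forestP E F :
  out_forest E F <-> [/\ F \subset E, single_parent F & arc_acyclic F].
Proof.
split.
  case/andP=> sFE /forallP trees.
  have tree_at a : a \in F -> exists r,
      [/\ a \in restrict F (wcomp F a.2) &
           diverging_tree (wcomp F a.2) (restrict F (wcomp F a.2)) r].
    move=> aF; have /existsP[r tr] := trees a.2; exists r; split=> //.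
    have a2 := wcomp_self F a.2.
    by rewrite in_restrict aF a2 andbT (wcomp_bwd a2) // -surjective_pairing.
  split=> // [a b aF bF /= ab|a aF].
    have [r [aT tr]] := tree_at a aF; have [uT _ _] := diverging_tree_elim tr.
    have [r' [bT _]] := tree_at b bF; rewrite -ab in bT.
    exact: uT aT bT ab.
  have [r [aT tr]] := tree_at a aF; have [_ _ aT'] := diverging_tree_elim tr.
  apply: contra (aT' a aT); apply: reach_restrict; last exact: wcomp_self.
  by move=> u v uS uv; apply: wcomp_fwd uS uv.
case=> sFE uF aF; apply/andP; split => //; apply/forallP => x; apply/existsP.
have [r rF rx] := root_exists aF x; exists r.
have wE := wcomp_root uF rF rx; set S := wcomp F x in wE *.
have Sfwd u v : u \in S -> (u, v) \in F -> v \in S.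
  by rewrite wE !inE => ru uv; apply: reach_trans ru (reach_arc uv).
have rS : r \in S by rewrite wE inE reach_refl.
apply: diverging_tree_intro => //.
- by apply/subsetP => -[u v]; rewrite in_restrict in_setX => /and3P[_ -> ->].
- exact: single_parent_sub (restrict_sub F S) uF.
- exact: roots_sub (restrict_sub F S) rF.
- by move=> y yS; apply: reach_restrict => //; move: yS; rewrite wE inE.
Qed.

Lemma in_tree_rootedE E F i j : out_forest E F ->
  in_tree_rooted F i j = (j \in roots F) && reach F j i.
Proof.
case/out_forestP=> _ uF aF; have [r rF ri] := root_exists aF i.
rewrite /in_tree_rooted (wcomp_root uF rF ri) inE; apply/idP/idP.
  case/andP=> rj /forall_inP jspan.
  have jr : reach F j r by apply: jspan; rewrite inE reach_refl.
  by have ej := root_reach rF jr; subst j; rewrite rF ri.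
case/andP=> jF ji; have ej := root_uniq uF rF jF ri ji; subst j.
by rewrite reach_refl; apply/forall_inP => y; rewrite inE.
Qed.

Lemma in_tree_rooted_uniq E F i : out_forest E F ->
  exists r, forall k, in_tree_rooted F i k = (k == r).
Proof.
move=> oF; have /out_forestP[_ uF aF] := oF; have [r rF ri] := root_exists aF i.
exists r => k; rewrite (in_tree_rootedE _ _ oF); apply/idP/eqP => [/andP[kF ki]|->].
  exact: root_uniq uF kF rF ki ri.
by rewrite rF ri.
Qed.

Lemma diverging_tree_root_uniq S T r1 r2 :
  diverging_tree S T r1 -> diverging_tree S T r2 -> r1 = r2.
Proof.
move=> tr1 tr2; have [_ h1 _] := diverging_tree_elim tr1; have [_ h2 _] := diverging_tree_elim tr2.
case/and4P: tr1 => _ _ r1S _; apply/eqP; apply: contraT => neq.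
have e : S :\ r1 = S :\ r2 by rewrite -h1 h2.
by have := congr1 (fun A : {set V} => r1 \in A) e; rewrite /= !in_setD1 eqxx r1S neq.
Qed.

End Forests.

Section Leaf.
Variable n : nat.
Local Notation V := 'I_n.
Local Notation arcs := {set V * V}.

Variables (F : arcs) (a b : V).
Hypotheses (b_out : forall u, (b, u) \in F = false) (b_in : forall u, (u, b) \in F = false).
Hypothesis neq_ab : a != b.

Lemma reach_add_leaf x y : reach ((a, b) |: F) x y -> y = b \/ reach F x y.
Proof.
move=> xy; have : y \in [set z | (z == b) || reach F x z].
  apply: (reach_fwd_closed _ _ xy); last by rewrite inE reach_refl orbT.
  move=> u v; rewrite !inE => /orP[/eqP ->|xu] /orP[/eqP[_ ->]|uv].
  - by rewrite eqxx.
  - by rewrite b_out in uv.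
  - by rewrite eqxx.
  - by rewrite (reach_trans xu (reach_arc uv)) orbT.
by rewrite inE => /orP[/eqP|]; [left|right].
Qed.

Lemma reach_from_leaf y : reach F b y -> y = b.
Proof.
move=> b_y; have : y \in [set b]; last by rewrite inE => /eqP.
apply: (reach_fwd_closed _ _ b_y); last by rewrite inE.
by move=> u v; rewrite inE => /eqP ->; rewrite b_out.
Qed.

Lemma single_parent_add_leaf : single_parent F -> single_parent ((a, b) |: F).
Proof.
move=> uF e1 e2; rewrite !in_setU1.
case/orP=> [/eqP->|e1F] /orP[/eqP->|e2F] //= e12.
- by move: e2F; case: e2 e12 => u v /= <-; rewrite b_in.
- by move: e1F; case: e1 e12 => u v /= ->; rewrite b_in.
- exact: uF.
Qed.

Lemma acyclic_add_leaf : arc_acyclic F -> arc_acyclic ((a, b) |: F).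
Proof.
move=> aF e; rewrite in_setU1 => /orP[/eqP->|eF] /=; apply/negP => /reach_add_leaf[].
- by move=> eab; move: neq_ab; rewrite eab eqxx.
- by move/reach_from_leaf => eab; move: neq_ab; rewrite eab eqxx.
- by move=> e1b; move: eF; case: e e1b => u v /= ->; rewrite b_out.
- exact/negP/aF.
Qed.

Lemma heads_add_leaf : heads ((a, b) |: F) = b |: heads F.
Proof.
apply/setP => y; rewrite in_setU1; apply/headsP/orP.
  by case=> u; rewrite in_setU1 => /orP[/eqP[_ ->]|uy]; [left|right; apply/headsP; exists u].
case=> [/eqP->|/headsP[u uy]]; first by exists a; rewrite in_setU1 eqxx.
by exists u; rewrite in_setU1 uy orbT.
Qed.

End Leaf.

Section Growth.
Variable n : nat.
Local Notation V := 'I_n.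
Local Notation arcs := {set V * V}.
Variable E : arcs.
Implicit Types (R X : {set V}) (G : arcs).

(* Invariant of the greedy construction of a spanning forest of E with root
   set R: G is a forest of arcs of E on the vertex set X whose roots in X are
   exactly R, and every vertex of X reachable from c in E is reached from c
   in G. *)
Record growing (R : {set V}) (c : V) (X : {set V}) (G : arcs) : Prop := Growing {
  grow_sub : G \subset E;
  grow_single : single_parent G;
  grow_acyclic : arc_acyclic G;
  grow_heads : heads G = X :\: R;
  grow_roots : R \subset X;
  grow_tails : forall e, e \in G -> e.1 \in X;
  grow_reach : forall x, x \in X -> reach E c x -> reach G c x }.

Lemma growing_init R c : c \in R -> (forall r, r \in R -> reach E c r -> r = c) ->
  growing R c R set0.
Proof.
move=> cR Rc; constructor.
- exact: sub0set.
- by move=> a b; rewrite in_set0.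
- by move=> a; rewrite in_set0.
- by apply/setP => y; rewrite setDv in_set0; apply/negbTE/headsP => -[u]; rewrite in_set0.
- exact: subxx.
- by move=> e; rewrite in_set0.
- by move=> x xR /(Rc x xR) ->; apply: reach_refl.
Qed.

Lemma growing_step R c X G a b : growing R c X G -> (a, b) \in E -> a \in X ->
  b \notin X -> (reach E c b -> reach G c a) -> growing R c (b |: X) ((a, b) |: G).
Proof.
move=> [sGE uG aG hG RX tG rG] ab aX bX cb.
have b_out u : (b, u) \in G = false by apply/negP => /tG /=; rewrite (negPf bX).
have b_in u : (u, b) \in G = false.
  apply/negP => ub; have : b \in heads G by apply/headsP; exists u.
  by rewrite hG in_setD (negPf bX) andbF.
have neq_ab : a != b by apply: contraNneq bX => <-.
constructor.
- by rewrite subUset sub1set ab sGE.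
- exact: single_parent_add_leaf.
- exact: acyclic_add_leaf.
- apply/setP => y; rewrite heads_add_leaf hG !inE.
  by have [->|//=] := eqVneq y b; rewrite (contraNN (subsetP RX b) bX).
- exact: subset_trans RX (subsetUr _ _).
- by move=> e; rewrite !in_setU1 => /orP[/eqP->|/tG ->]; rewrite ?aX orbT.
- move=> x; rewrite in_setU1 => /orP[/eqP->|xX] cx.
    by apply: reach_trans (reach_sub (subsetUr _ _) (cb cx)) (reach_arc _); rewrite in_setU1 eqxx.
  exact: reach_sub (subsetUr _ _) (rG x xX cx).
Qed.

Lemma frontier_arc R c X G : c \in R -> growing R c X G -> X != setT ->
  (forall i, exists2 r, r \in R & reach E r i) ->
  exists a b, [/\ (a, b) \in E, a \in X, b \notin X & (reach E c b -> reach G c a)].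
Proof.
move=> cR gXG XT Rspan.
have [v _ vX] : exists2 v, v \in [set: V] & v \notin X.
  by apply/subsetPn; apply: contra XT => sTX; rewrite eqEsubset subsetT sTX.
have [v' /andP[v'X cv']|noc] := pickP (fun v => (v \notin X) && reach E c v).
  set P := [set x | (x \in X) && reach G c x].
  have cP : c \notin ~: P by rewrite in_setC negbK inE (subsetP (grow_roots gXG)) // reach_refl.
  have v'P : v' \in ~: P by rewrite in_setC inE (negPf v'X).
  have [u [b []]] := reach_cross cv' cP v'P; rewrite !in_setC negbK !inE.
  case/andP=> uX cu /negP bP ub; exists u, b; split=> //.
  apply/negP => bX; apply: bP; rewrite bX (grow_reach gXG) //.
  exact: reach_trans (reach_sub (grow_sub gXG) cu) (reach_arc ub).
have [r rR rv] := Rspan v.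
have rX : r \notin ~: X by rewrite in_setC negbK (subsetP (grow_roots gXG)).
have vX' : v \in ~: X by rewrite in_setC.
have [u [b []]] := reach_cross rv rX vX'; rewrite !in_setC negbK => uX bX ub.
by exists u, b; split=> // cb; have := noc b; rewrite bX cb.
Qed.

Lemma growing_full R c G : growing R c setT G ->
  [/\ out_forest E G, roots G = R & forall i, reach E c i -> reach G c i].
Proof.
case=> sGE uG aG hG _ _ rG; split.
- exact/out_forestP.
- by rewrite /roots hG setTD setCK.
- by move=> i; apply: rG; rewrite inE.
Qed.

Lemma grow_forest R c : c \in R -> (forall i, exists2 r, r \in R & reach E r i) ->
  (forall r, r \in R -> reach E c r -> r = c) ->
  exists G, [/\ out_forest E G, roots G = R & forall i, reach E c i -> reach G c i].
Proof.
move=> cR Rspan Rc.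
suff grow k X G : n - #|X| <= k -> growing R c X G -> exists G', [/\ out_forest E G',
    roots G' = R & forall i, reach E c i -> reach G' c i].
  exact: (grow _ _ _ (leqnn _) (growing_init cR Rc)).
elim: k X G => [|k IHk] X G sizeX gXG; have [XT|XT] := eqVneq X setT.
- by exists G; apply: growing_full; rewrite -XT.
- have : #|X| < #|[set: V]| by apply: proper_card; rewrite properT.
  by rewrite cardsT card_ord -subn_gt0 lt0n -leqn0 sizeX.
- by exists G; apply: growing_full; rewrite -XT.
have [a [b [ab aX bX cb]]] := frontier_arc cR gXG XT Rspan.
apply: IHk (growing_step gXG ab aX bX cb).
by rewrite cardsU1 bX add1n subnS; move: sizeX; case: (n - #|X|).
Qed.

End Growth.

Section Maximum.
Variable n : nat.
Local Notation V := 'I_n.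
Local Notation arcs := {set V * V}.
Variable E : arcs.
Implicit Types (F G : arcs) (R : {set V}).

(* v is a source when every vertex reaching v is reached from v, i.e. the
   strong component of v is a basis bicomponent. *)
Definition source (v : V) : bool := [forall u, reach E u v ==> reach E v u].

Lemma sourceP v : reflect (forall u, reach E u v -> reach E v u) (source v).
Proof.
apply: (iffP forallP) => vsrc u; first exact: (implyP (vsrc u)).
by apply/implyP; apply: vsrc.
Qed.

(* Every vertex is reached from a source: take an ancestor with fewest ancestors. *)
Lemma source_exists i : exists2 u, source u & reach E u i.
Proof.
pose anc u := #|[set v | reach E v u]|.
have [u ui umin] := @arg_minnP _ i (fun u => reach E u i) anc (reach_refl E i).
exists u => //; apply/sourceP => a au; apply/negPn/negP => ua.
have /umin : reach E a i := reach_trans au ui.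
rewrite leqNgt => /negP; apply; apply: proper_card; apply/properP; split.
  by apply/subsetP => v; rewrite !inE => va; apply: reach_trans va au.
by exists u; rewrite inE ?reach_refl.
Qed.

(* A ranking of the vertices putting c first, used to choose c as the
   representative of its own strong component. *)
Definition rank (c u : V) : nat := if u == c then 0 else u.+1.

Lemma rank_inj c : injective (rank c).
Proof.
move=> u v; rewrite /rank.
by case: (eqVneq u c) => [->|_]; case: (eqVneq v c) => [->|_] // [/val_inj].
Qed.

(* One representative per source component: its source of least rank. *)
Definition class_reps (c : V) : {set V} :=
  [set v | source v && [forall u, reach E u v ==> (rank c v <= rank c u)]].

Lemma class_repsP c v : v \in class_reps c ->
  source v /\ forall u, reach E u v -> rank c v <= rank c u.
Proof. by rewrite inE => /andP[-> /forallP vmin]; split => // u; apply/implyP. Qed.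

Lemma class_reps_props c : source c -> [/\ c \in class_reps c,
  (forall r, r \in class_reps c -> reach E c r -> r = c) &
  (forall i, exists2 r, r \in class_reps c & reach E r i)].
Proof.
move=> csrc; split.
- by rewrite inE csrc; apply/forall_inP => u _; rewrite /rank eqxx.
- move=> r /class_repsP[_ rmin] /rmin; rewrite {2}/rank eqxx leqn0 => /eqP r0.
  by apply: (@rank_inj c); rewrite r0 /rank eqxx.
move=> i; have [u usrc ui] := source_exists i.
have uu : reach E u u && reach E u u by rewrite reach_refl.
have [x /andP[xu ux] xmin] := @arg_minnP _ u (fun x => reach E x u && reach E u x) (rank c) uu.
exists x; last exact: reach_trans xu ui.
have ysrc y : reach E y x -> reach E u y.
  by move=> yx; apply: (sourceP _ usrc); apply: reach_trans yx xu.
rewrite inE; apply/andP; split.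
  by apply/sourceP => y yx; apply: reach_trans xu (ysrc y yx).
by apply/forall_inP => y yx; apply: xmin; rewrite (reach_trans yx xu) ysrc.
Qed.

(* The roots of F capture their ancestors: every vertex that can reach a
   root r in E is reached from r inside F.  This characterises maximum
   out-forests (max_out_forestP). *)
Definition roots_capture F : Prop :=
  forall r, r \in roots F -> forall v, reach E v r -> reach F r v.

Lemma class_reps_capture c G : out_forest E G -> roots G = class_reps c -> roots_capture G.
Proof.
case/out_forestP=> sGE _ aG rootsG r rG v vr.
have [r' r'G r'v] := root_exists aG v.
have r'r : reach E r' r := reach_trans (reach_sub sGE r'v) vr.
move: rG r'G; rewrite rootsG => /class_repsP[rsrc rmin] /class_repsP[_ r'min].
have rr' : reach E r r' := sourceP _ rsrc _ r'r.
suff -> : r = r' by [].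
by apply: (@rank_inj c); apply/anti_leq; rewrite rmin ?r'min.
Qed.

Lemma capturing_forest c : source c -> exists G,
  [/\ out_forest E G, roots_capture G, c \in roots G & forall i, reach E c i -> reach G c i].
Proof.
move=> csrc; have [cR Rc Rspan] := class_reps_props csrc.
have [G [oG rootsG cG]] := grow_forest cR Rspan Rc.
by exists G; split=> //; [apply: class_reps_capture oG rootsG | rewrite rootsG].
Qed.

Definition root_of F (g : V) : V := odflt g [pick h in roots F | reach F h g].

Lemma root_ofP F g : arc_acyclic F -> root_of F g \in roots F /\ reach F (root_of F g) g.
Proof.
rewrite /root_of => aF; case: pickP => [h /andP[]|nroot] //=.
by have [h hF hg] := root_exists aF g; move: (nroot h); rewrite hF hg.
Qed.

Lemma root_of_inj F G : F \subset E -> arc_acyclic F -> single_parent G ->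
  roots_capture G -> {in roots G &, injective (root_of F)}.
Proof.
move=> sFE aF uG capG g1 g2 g1G g2G e12.
have [_ hg1] := root_ofP g1 aF; have [_ hg2] := root_ofP g2 aF; rewrite e12 in hg1.
exact: root_uniq uG g1G g2G (capG _ g1G _ (reach_sub sFE hg1)) (capG _ g2G _ (reach_sub sFE hg2)).
Qed.

Lemma capture_fewest_roots F G : out_forest E F -> out_forest E G -> roots_capture G ->
  #|roots G| <= #|roots F|.
Proof.
case/out_forestP=> sFE _ aF /out_forestP[_ uG _] capG.
rewrite -(card_in_imset (root_of_inj sFE aF uG capG)); apply: subset_leq_card.
by apply/subsetP => _ /imsetP[g _ ->]; case: (root_ofP g aF).
Qed.

Lemma root_of_onto F G : out_forest E F -> out_forest E G -> roots_capture G ->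
  #|roots F| <= #|roots G| -> root_of F @: roots G = roots F.
Proof.
case/out_forestP=> sFE _ aF /out_forestP[_ uG _] capG rFG; apply/eqP.
rewrite eqEcard (card_in_imset (root_of_inj sFE aF uG capG)) rFG andbT.
by apply/subsetP => _ /imsetP[g _ ->]; case: (root_ofP g aF).
Qed.

(* Since #|F| + #|roots F| = n, more arcs means fewer roots. *)
Lemma out_forest_card_le F G : out_forest E F -> out_forest E G ->
  (#|G| <= #|F|) = (#|roots F| <= #|roots G|).
Proof.
case/out_forestP=> _ uF _ /out_forestP[_ uG _].
have e : #|G| + #|roots G| = #|F| + #|roots F| by rewrite !card_arcs_roots.
by rewrite -(leq_add2r #|roots G|) e leq_add2l.
Qed.

(* The empty arc set is an out-forest, so a maximum one exists. *)
Lemma max_out_forest_exists : exists F, max_out_forest E F.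
Proof.
have o0 : out_forest E set0 by apply/out_forestP; split; rewrite ?sub0set // => a; rewrite in_set0.
have [F oF Fmax] := @arg_maxnP _ set0 (out_forest E) (fun F => #|F|) o0.
by exists F; apply/andP; split=> //; apply/forall_inP.
Qed.

Lemma mof_out_forest F : max_out_forest E F -> out_forest E F.
Proof. by case/andP. Qed.

Lemma mof_sub F : max_out_forest E F -> F \subset E.
Proof. by case/andP=> /andP[]. Qed.

Lemma max_out_forestP F : max_out_forest E F <-> out_forest E F /\ roots_capture F.
Proof.
split; last first.
  case=> oF capF; apply/andP; split=> //; apply/forall_inP => G oG.
  by rewrite out_forest_card_le //; apply: capture_fewest_roots.
case/andP=> oF /forall_inP Fmax; split=> // r rF v vr.
have [c csrc _] := source_exists r.
have [G [oG capG _ _]] := capturing_forest csrc.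
have [/out_forestP[sFE _ aF] /out_forestP[sGE _ _]] := (oF, oG).
have rFG : #|roots F| <= #|roots G| by rewrite -out_forest_card_le // Fmax.
(* r is the F-root of a root g of G, and the F-root r' of v is the F-root of
   a root g' of G; E-paths g -> r' -> g' then force g' = g, hence r' = r. *)
have onto := root_of_onto oF oG capG rFG.
move: (rF); rewrite -onto => /imsetP[g gG rE].
have [r' r'F r'v] := root_exists aF v.
move: (r'F); rewrite -onto => /imsetP[g' g'G r'E].
have [_ rg] := root_ofP g aF; have [_ r'g'] := root_ofP g' aF.
rewrite -rE in rg; rewrite -r'E in r'g'.
have vg : reach E v g := reach_trans vr (reach_sub sFE rg).
have gr' : reach E g r'.
  exact/(reach_sub sGE)/(capG _ gG)/(reach_trans (reach_sub sFE r'v) vg).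
have g'g : reach G g' g := capG _ g'G _ (reach_trans gr' (reach_sub sFE r'g')).
by move: r'v; rewrite r'E (root_reach gG g'g) -rE.
Qed.

End Maximum.

Section BasisBicomponent.
Variable n : nat.
Local Notation V := 'I_n.
Local Notation arcs := {set V * V}.
Variable E : arcs.
Implicit Types (F G T P : arcs).

Lemma scompE v u : (u \in scomp E v) = reach E u v && reach E v u.
Proof. by rewrite inE. Qed.

Lemma source_basis r : source E r -> basis_bicomp E (scomp E r).
Proof.
move=> rsrc; apply/andP; split; first by apply/existsP; exists r.
apply/forall_inP => -[u v] uv /=; apply/implyP; rewrite !scompE => /andP[vr _].
have ur : reach E u r := reach_trans (reach_arc uv) vr.
by rewrite ur (sourceP _ _ rsrc).
Qed.

Lemma source_Ktilde r : source E r -> r \in Ktilde E.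
Proof.
by move=> rsrc; apply/bigcupP; exists (scomp E r); rewrite ?source_basis ?scompE ?reach_refl.
Qed.

Lemma root_source F r : max_out_forest E F -> r \in roots F -> source E r.
Proof.
case/max_out_forestP=> /out_forestP[sFE _ _] capF rF; apply/sourceP => u ur.
exact: reach_sub sFE (capF r rF u ur).
Qed.

Variable K : {set V}.
Hypothesis HK : basis_bicomp E K.

Lemma basis_closed k u : k \in K -> reach E u k -> u \in K.
Proof.
case/andP: HK => _ /forall_inP Kin kK uk; apply: (reach_bwd_closed _ kK uk) => a b ab bK.
by have := Kin (a, b) ab; rewrite /= bK.
Qed.

Lemma basis_strong k1 k2 : k1 \in K -> k2 \in K -> reach E k1 k2.
Proof.
case/andP: HK => /existsP[v /eqP ->] _; rewrite !scompE.
by case/andP=> k1v _ /andP[_ vk2]; apply: reach_trans k1v vk2.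
Qed.

Lemma basis_source k : k \in K -> source E k.
Proof. by move=> kK; apply/sourceP => u uk; apply: basis_strong => //; apply: basis_closed uk. Qed.

Local Notation E' := (minusK E K).

Lemma minusK_sub : E' \subset E.
Proof. exact: subsetDl. Qed.

Lemma in_minusK a : (a \in E') = (a \in E) && (a.2 \notin K).
Proof.
rewrite /minusK in_setD in_restrict; case: (boolP (a \in E)) => //= aE.
case: (boolP (a.2 \in K)) => a2K; rewrite ?andbT ?andbF //=.
by case/andP: HK => _ /forall_inP /(_ a aE); rewrite a2K /= => ->.
Qed.

Lemma split_reach x r : r \notin K -> reach E x r ->
  reach E' x r \/ exists2 k, k \in K & reach E' k r.
Proof.
move=> rK xr.
have : x \in [set z | reach E' z r || [exists k in K, reach E' k r]].
  apply: (reach_bwd_closed _ _ xr); last by rewrite inE reach_refl.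
  move=> u v uv; rewrite !inE => /orP[vr|->]; last by rewrite orbT.
  case: (boolP (v \in K)) => vK; last by rewrite (reach_trans (reach_arc _) vr) ?in_minusK ?uv.
  by apply/orP; right; apply/exists_inP; exists v.
by rewrite inE => /orP[|/exists_inP[k kK kr]]; [left | right; exists k].
Qed.

End BasisBicomponent.

Lemma Ktilde_source n (E : {set 'I_n * 'I_n}) j : j \in Ktilde E -> source E j.
Proof. by case/bigcupP=> K HK jK; exact: (basis_source HK jK). Qed.

Section Decomposition.
Variable n : nat.
Local Notation V := 'I_n.
Local Notation arcs := {set V * V}.
Variable E : arcs.
Variable K : {set V}.
Hypothesis HK : basis_bicomp E K.
Local Notation E' := (minusK E K).
Implicit Types (F G T P : arcs).

Lemma roots_setU F G : roots (F :|: G) = roots F :&: roots G.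
Proof. by rewrite /roots /heads imsetU setCU. Qed.

Lemma reach_into_K G x y : (forall a, a \in G -> a.2 \notin K) -> y \in K ->
  reach G x y -> x = y.
Proof.
move=> G_out yK xy; apply/eqP; apply: contraT => neq.
by have [u _ /G_out] := reach_last xy neq; rewrite /= yK.
Qed.

Lemma minusK_out a : a \in E' -> a.2 \notin K.
Proof. by rewrite (in_minusK HK) => /andP[]. Qed.

Section Split.
(* An arc set T inside K together with an arc set P entering no vertex of K:
   this is how a maximum out-forest of E rooted in K decomposes. *)
Variables T P : arcs.
Hypothesis T_in : T \subset setX K K.
Hypothesis P_out : forall a, a \in P -> a.2 \notin K.

Let T_ends a : a \in T -> (a.1 \in K) && (a.2 \in K).
Proof. by move/(subsetP T_in); case: a => u v; rewrite in_setX. Qed.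

Lemma split_restrict : restrict (T :|: P) K = T.
Proof.
apply/setP => a; rewrite in_restrict in_setU.
case: (boolP (a \in T)) => [aT|_] /=; first by rewrite T_ends.
by case: (boolP (a \in P)) => //= /P_out /negPf ->; rewrite andbF.
Qed.

Lemma split_diff : (T :|: P) :\: restrict (T :|: P) K = P.
Proof.
rewrite split_restrict; apply/setP => a; rewrite in_setD in_setU.
case: (boolP (a \in T)) => //= aT; apply/esym/negP => /P_out.
by case/andP: (T_ends aT) => _ ->.
Qed.

Lemma split_disjoint : [disjoint T & P].
Proof.
apply/pred0P => a /=; apply/negP => /andP[/T_ends/andP[_ a2K] /P_out].
by rewrite a2K.
Qed.

Lemma split_reach_out x y : reach (T :|: P) x y -> x \notin K -> reach P x y.
Proof.
move=> xy xK; have : y \in [set z | (z \notin K) && reach P x z].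
  apply: (reach_fwd_closed _ _ xy); last by rewrite inE xK reach_refl.
  move=> u v; rewrite !inE => /andP[uK xu] /orP[/T_ends|uv].
    by rewrite (negPf uK).
  by have /= -> := P_out uv; rewrite (reach_trans xu (reach_arc uv)).
by rewrite inE => /andP[].
Qed.

Lemma split_reach_in x y : reach (T :|: P) x y -> y \in K -> reach T x y.
Proof.
move=> xy yK; have : x \in [set z | (z \in K) && reach T z y].
  apply: (reach_bwd_closed _ _ xy); last by rewrite inE yK reach_refl.
  move=> u v; rewrite !inE => /orP[uv|/P_out /= vK] /andP[vK' vy].
    by rewrite (reach_trans (reach_arc uv) vy) andbT; case/andP: (T_ends uv).
  by rewrite vK' in vK.
by rewrite inE => /andP[].
Qed.

Lemma split_single : single_parent T -> single_parent P -> single_parent (T :|: P).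
Proof.
move=> uT uP a b; rewrite !in_setU.
case/orP=> [aT|aP] /orP[bT|bP] /= ab; first exact: uT.
- by have := P_out bP; case/andP: (T_ends aT) => _; rewrite ab => ->.
- by have := P_out aP; case/andP: (T_ends bT) => _; rewrite ab => ->.
- exact: uP.
Qed.

Lemma split_acyclic : arc_acyclic T -> arc_acyclic P -> arc_acyclic (T :|: P).
Proof.
move=> aT aP a; rewrite in_setU => /orP[aT'|aP'].
  apply: contra (aT a aT') => cyc; apply: split_reach_in cyc _.
  by case/andP: (T_ends aT').
by apply: contra (aP a aP') => cyc; apply: split_reach_out cyc (P_out aP').
Qed.

Lemma split_reach_from j i : j \in K -> (forall k, k \in K -> reach T j k) ->
  reach (T :|: P) j i = [exists k in K, reach P k i].
Proof.
move=> jK Tspan; apply/idP/exists_inP => [ji|[k kK ki]]; last first.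
  exact: reach_trans (reach_sub (subsetUl _ _) (Tspan k kK)) (reach_sub (subsetUr _ _) ki).
have : i \in [set y | (y \in K) || [exists k in K, reach P k y]].
  apply: (reach_fwd_closed _ _ ji); last by rewrite inE jK.
  move=> y z; rewrite !inE => yK /orP[/T_ends/andP[_ ->]//|yz].
  apply/orP; right; case/orP: yK => [yK|/exists_inP[k kK ky]]; apply/exists_inP.
    by exists y => //; apply: reach_arc.
  by exists k => //; apply: reach_trans ky (reach_arc yz).
rewrite inE => /orP[iK|/exists_inP//]; by exists i => //; apply: reach_refl.
Qed.

End Split.

Lemma forest_split F : F \subset E -> restrict F K \subset setX K K /\
  forall a, a \in F :\: restrict F K -> a.2 \notin K.
Proof.
move=> sFE; split.
- by apply/subsetP => -[u v]; rewrite in_restrict in_setX => /and3P[_ -> ->].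
- move=> a; rewrite in_setD in_restrict => /andP[aR aF]; apply: minusK_out.
  rewrite /minusK in_setD (subsetP sFE a aF) andbT; apply: contra aR.
  by rewrite !in_restrict aF => /andP[_ ->].
Qed.

Section RootInK.
Variable j : V.
Hypothesis jK : j \in K.

Lemma decomp_fwd T P : T \subset E -> diverging_tree K T j -> max_out_forest E' P ->
  max_out_forest E (T :|: P) /\ j \in roots (T :|: P).
Proof.
move=> sTE tree /max_out_forestP[/out_forestP[sPE' uP aP] capP].
have [uT headsT aT] := diverging_tree_elim tree.
case/and4P: (tree) => T_in _ _ /forall_inP Tspan.
have P_out a : a \in P -> a.2 \notin K by move/(subsetP sPE'); apply: minusK_out.
have jroot : j \in roots (T :|: P).
  rewrite roots_setU inE [j \in roots T]in_setC headsT in_setD1 eqxx /=.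
  by rewrite in_setC; apply/headsP => -[u /P_out]; rewrite /= jK.
split=> //; apply/max_out_forestP; split.
  apply/out_forestP; split.
  - by rewrite subUset sTE (subset_trans sPE' (minusK_sub _ _)).
  - exact: split_single T_in P_out uT uP.
  - exact: split_acyclic T_in P_out aT aP.
move=> r; rewrite roots_setU inE => /andP[rT rP] v vr.
have [rK|rK] := boolP (r \in K).
  have rj : r = j.
    apply/eqP; apply: contraTT rT => neq.
    by rewrite in_setC negbK headsT in_setD1 neq rK.
  rewrite rj in vr *; exact: reach_sub (subsetUl _ _) (Tspan v (basis_closed HK jK vr)).
have [vr'|[k kK kr]] := split_reach HK rK vr.
  exact: reach_sub (subsetUr _ _) (capP r rP v vr').
by have rk := reach_into_K P_out kK (capP r rP k kr); rewrite rk kK in rK.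
Qed.

Lemma decomp_bwd F : max_out_forest E F -> j \in roots F ->
  [/\ restrict F K \subset E, diverging_tree K (restrict F K) j &
      max_out_forest E' (F :\: restrict F K)].
Proof.
case/max_out_forestP=> /out_forestP[sFE uF aF] capF jF.
have [T_in P_out] := forest_split sFE; have Fsplit := esym (restrict_setUD F K).
set T := restrict F K in T_in P_out Fsplit *; set P := F :\: T in P_out Fsplit *.
have sTF : T \subset F := restrict_sub F K.
have sPF : P \subset F := subsetDl F T.
have Tspan k : k \in K -> reach T j k.
  move=> kK; apply: (split_reach_in T_in P_out _ kK).
  by rewrite -Fsplit; apply: capF j jF k (basis_strong HK kK jK).
have tree : diverging_tree K T j.
  apply: diverging_tree_intro => //; last exact: roots_sub sTF jF.
  exact: single_parent_sub sTF uF.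
have oP : out_forest E' P.
  apply/out_forestP; split.
  - apply/subsetP => a aP; rewrite (in_minusK HK) P_out // andbT.
    exact: subsetP sFE _ (subsetP sPF _ aP).
  - exact: single_parent_sub sPF uF.
  - exact: acyclic_sub sPF aF.
split=> //; first exact: subset_trans sTF sFE.
apply/max_out_forestP; split=> // r rP v vr; have [rK|rK] := boolP (r \in K).
  by rewrite (reach_into_K minusK_out rK vr) reach_refl.
have rF : r \in roots F.
  rewrite Fsplit roots_setU inE rP andbT in_setC.
  by apply/headsP => -[u /(subsetP T_in)]; rewrite in_setX (negPf rK) andbF.
apply: (split_reach_out T_in P_out _ rK).
by rewrite -Fsplit; apply: capF r rF v (reach_sub (minusK_sub _ _) vr).
Qed.

(* The reindexing F <-> (T, P) behind the factorisation of the numerator of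
   Jbar_ij: F is a maximum out-forest in whose j-tree i lies iff its parts T
   inside K and P outside form a spanning tree of Gamma_K rooted at j and a
   maximum out-forest of Gamma_{-K} in which i is reachable from K. *)
Lemma decompP T P i :
  [&& max_out_forest E (T :|: P), j \in roots (T :|: P) & reach (T :|: P) j i] &&
    ((restrict (T :|: P) K, (T :|: P) :\: restrict (T :|: P) K) == (T, P)) =
  ((T \subset E) && diverging_tree K T j) && (max_out_forest E' P && [exists k in K, reach P k i]).
Proof.
apply/idP/idP.
  case/andP=> /and3P[mF jF ji] /eqP[Tdef Pdef].
  have [sTE tree mP] := decomp_bwd mF jF.
  rewrite Tdef in sTE tree; rewrite Pdef in mP.
  case/and4P: (tree) => T_in _ _ /forall_inP Tspan.
  by rewrite sTE tree mP -(split_reach_from P T_in i jK Tspan).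
case/andP=> /andP[sTE tree] /andP[mP Ki].
have [mF jF] := decomp_fwd sTE tree mP.
case/and4P: (tree) => T_in _ _ /forall_inP Tspan.
have P_out a : a \in P -> a.2 \notin K by move/(subsetP (mof_sub mP)); apply: minusK_out.
rewrite mF jF (split_reach_from P T_in) // Ki.
by rewrite (split_diff T_in P_out) (split_restrict T_in P_out) eqxx.
Qed.

End RootInK.

Lemma basis_nonempty : exists k, k \in K.
Proof. by case/andP: HK => /existsP[v /eqP ->] _; exists v; rewrite scompE reach_refl. Qed.

Lemma max_forest_root_in_K F : max_out_forest E F ->
  exists r, forall j, (j \in K) && (j \in roots F) = (j == r).
Proof.
move=> mF; have /max_out_forestP[/out_forestP[sFE _ aF] capF] := mF.
have [k kK] := basis_nonempty; have [r rF rk] := root_exists aF k.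
have rK := basis_closed HK kK (reach_sub sFE rk).
exists r => j; apply/idP/eqP => [/andP[jK jF]|->]; last by rewrite rK.
by apply/esym/(root_reach jF); apply: capF r rF j (basis_strong HK jK rK).
Qed.

(* In every maximum out-forest of Gamma_{-K}, the vertices of K and K^+ are
   reachable from K: a tree rooted outside K is rooted at a source of another
   basis bicomponent, from which K^+ is unreachable. *)
Lemma minusK_forest_reach P i : max_out_forest E' P -> (i \in K) || (i \in Kplus E K) ->
  [exists k in K, reach P k i].
Proof.
case/max_out_forestP=> /out_forestP[sPE' _ aP] capP /orP[iK|iKp].
  by apply/exists_inP; exists i => //; apply: reach_refl.
have [r rP ri] := root_exists aP i.
have [rK|rK] := boolP (r \in K); first by apply/exists_inP; exists r.
have sPE := subset_trans sPE' (minusK_sub E K).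
have P_out a : a \in P -> a.2 \notin K by move/(subsetP sPE'); apply: minusK_out.
have rsrc : source E r.
  apply/sourceP => u ur; have [ur'|[k kK kr]] := split_reach HK rK ur.
    exact: reach_sub sPE (capP r rP u ur').
  by have rk := reach_into_K P_out kK (capP r rP k kr); rewrite rk kK in rK.
have other : scomp E r != K by apply: contraNneq rK => <-; rewrite scompE reach_refl.
move: iKp; rewrite inE => /andP[_ /forallP /(_ (scomp E r))].
rewrite source_basis // other /= => /forall_inP /(_ r).
by rewrite scompE reach_refl (reach_sub sPE ri) => /(_ isT).
Qed.

End Decomposition.

Local Open Scope ring_scope.

Lemma sum_partition (R : nmodType) (I J : finType) (P : pred I) (S : pred J)
    (Q : I -> J -> bool) (f : I -> R) :
  (forall x, P x -> exists y0, forall y, (S y && Q x y) = (y == y0)) ->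
  (forall x y, S y -> Q x y -> P x) ->
  \sum_(x | P x) f x = \sum_(y | S y) \sum_(x | Q x y) f x.
Proof.
move=> cls QP; rewrite (exchange_big_dep P) /=; last by move=> y x; apply: QP.
apply: eq_bigr => x Px; have [y0 Qy0] := cls x Px.
by rewrite (big_pred1 y0) // => y; rewrite /= Qy0.
Qed.

Lemma sum_gt0 (R : numDomainType) (I : finType) (P : pred I) (f : I -> R) x0 :
  (forall x, P x -> 0 < f x) -> P x0 -> 0 < \sum_(x | P x) f x.
Proof.
move=> fpos Px0; rewrite (bigD1 x0) //=; apply: ltr_wpDr; last exact: fpos.
by apply: sumr_ge0 => x /andP[Px _]; apply/ltW/fpos.
Qed.

Section Weights.
Variable R : realFieldType.
Variable n : nat.
Local Notation V := 'I_n.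
Local Notation arcs := {set V * V}.
Variable E : arcs.
Variable w : V -> V -> R.
Hypothesis w_pos : forall a, a \in E -> 0 < w a.1 a.2.
Implicit Types (F G T P : arcs).

Lemma wt_setU T P : [disjoint T & P] -> wt w (T :|: P) = wt w T * wt w P.
Proof. by move=> dTP; rewrite /wt -bigU //=; apply: eq_bigl => a; rewrite in_setU. Qed.

Lemma wt_pos F : F \subset E -> 0 < wt w F.
Proof. by move=> sFE; apply: prodr_gt0 => a aF; apply/w_pos/(subsetP sFE). Qed.

Lemma sigma_pos (E0 : arcs) : E0 \subset E -> 0 < sigma_max E0 w.
Proof.
move=> sE0; have [F mF] := max_out_forest_exists E0; apply: (sum_gt0 _ mF) => G mG.
exact/wt_pos/(subset_trans (mof_sub mG)).
Qed.

Definition Jnum (i j : V) : R :=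
  \sum_(F : arcs | max_out_forest E F && in_tree_rooted F i j) wt w F.

Lemma JbarE i j : Jbar E w i j = Jnum i j / sigma_max E w.
Proof. by []. Qed.

Lemma JnumE i j :
  Jnum i j = \sum_(F | [&& max_out_forest E F, j \in roots F & reach F j i]) wt w F.
Proof.
apply: eq_bigl => F; case: (boolP (max_out_forest E F)) => //= /andP[oF _].
exact: in_tree_rootedE oF.
Qed.

Lemma Jnum_ge0 i j : 0 <= Jnum i j.
Proof. by apply: sumr_ge0 => F /andP[mF _]; apply/ltW/wt_pos/mof_sub. Qed.

(* Every maximum out-forest puts i in exactly one tree. *)
Lemma Jnum_row_sum i : \sum_(k < n) Jnum i k = sigma_max E w.
Proof.
rewrite /sigma_max (@sum_partition _ _ _ _ predT
  (fun F k => max_out_forest E F && in_tree_rooted F i k)) //.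
  move=> F mF; have [r Fr] := in_tree_rooted_uniq i (mof_out_forest mF).
  by exists r => k; rewrite /= mF Fr.
by move=> F k _ /andP[].
Qed.

Lemma Jnum_neq0 i j : (Jnum i j != 0) = (j \in Ktilde E) && reach E j i.
Proof.
apply/idP/andP => [|[jKt ji]].
  rewrite JnumE; case: (pickP [pred F | [&& max_out_forest E F, j \in roots F & reach F j i]]).
    move=> F /and3P[mF jF jiF] _; split; first exact/source_Ktilde/(root_source mF jF).
    exact: reach_sub (mof_sub mF) jiF.
  by move=> none; rewrite big_pred0 ?eqxx.
have [G [oG capG jG Gj]] := capturing_forest (Ktilde_source jKt).
have mG : max_out_forest E G by apply/max_out_forestP.
rewrite JnumE gt_eqF //; apply: (sum_gt0 _ (x0 := G)); last by rewrite mG jG Gj.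
by move=> F /andP[mF _]; apply/wt_pos/mof_sub.
Qed.

Section BasisWeights.
Variable K : {set V}.
Hypothesis HK : basis_bicomp E K.
Local Notation E' := (minusK E K).

Lemma Jnum_decomp j i : j \in K -> Jnum i j = epsTj E w K j * epsP E w K i.
Proof.
move=> jK; rewrite JnumE /epsTj /epsP big_distrlr /= pair_big /=.
rewrite (reindex_onto (fun p : arcs * arcs => p.1 :|: p.2)
           (fun F => (restrict F K, F :\: restrict F K))) /=; last first.
  by move=> F _; rewrite restrict_setUD.
apply: eq_big => [[T P]|[T P]] /=; first exact: decompP.
rewrite decompP // => /andP[/andP[_ tree] /andP[mP _]].
case/and4P: tree => T_in _ _ _; apply: wt_setU; apply: (split_disjoint T_in).
by move=> a /(subsetP (mof_sub mP)); apply: minusK_out.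
Qed.

(* Every maximum out-forest has exactly one root in K. *)
Lemma sigma_basis : sigma_max E w = \sum_(j in K) Jnum j j.
Proof.
rewrite /sigma_max (@sum_partition _ _ _ _ (mem K)
  (fun F k => max_out_forest E F && in_tree_rooted F k k)) //.
  move=> F mF; have [r Kr] := max_forest_root_in_K HK mF; exists r => j.
  by rewrite /= mF (in_tree_rootedE _ _ (mof_out_forest mF)) reach_refl andbT Kr.
by move=> F k _ /andP[].
Qed.

(* Every spanning diverging tree of Gamma_K has exactly one root. *)
Lemma epsT_sum : epsT E w K = \sum_(j in K) epsTj E w K j.
Proof.
rewrite /epsT (@sum_partition _ _ _ _ (mem K)
  (fun T k => (T \subset E) && diverging_tree K T k)) //.
  move=> T /andP[sTE /existsP[r tree]]; exists r => j /=; rewrite sTE /=.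
  apply/idP/eqP => [/andP[_ tree']|->]; first exact: diverging_tree_root_uniq tree' tree.
  by rewrite tree andbT; case/and4P: tree.
by move=> T k _ /andP[-> tree]; apply/existsP; exists k.
Qed.

Lemma epsP_full i : (i \in K) || (i \in Kplus E K) -> epsP E w K i = sigma_max E' w.
Proof.
move=> iKp; apply: eq_bigl => P; case: (boolP (max_out_forest E' P)) => //= mP.
exact (minusK_forest_reach HK mP iKp).
Qed.

(* Gamma_K has spanning trees rooted at each of its vertices (Jbar_jj > 0). *)
Lemma epsTj_neq0 j : j \in K -> epsTj E w K j != 0.
Proof.
move=> jK; have := Jnum_neq0 j j.
rewrite (source_Ktilde (basis_source HK jK)) reach_refl (Jnum_decomp j jK).
by rewrite mulf_eq0 => /norP[].
Qed.

End BasisWeights.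
End Weights.

Section Claims.
Variable R : realFieldType.
Variable n : nat.
Local Notation V := 'I_n.
Local Notation arcs := {set V * V}.
Variable E : arcs.
Variable w : V -> V -> R.
Hypothesis w_pos : forall a, a \in E -> 0 < w a.1 a.2.

Lemma sigma_neq0 (E0 : arcs) : E0 \subset E -> sigma_max E0 w != 0.
Proof. by move=> sE0; rewrite gt_eqF // (sigma_pos w_pos sE0). Qed.

Lemma Jbar_ge0 i j : 0 <= Jbar E w i j.
Proof.
by rewrite JbarE divr_ge0 ?(Jnum_ge0 w_pos) // ltW // (sigma_pos w_pos (subxx E)).
Qed.

Lemma Jbar_row_sum i : \sum_(k < n) Jbar E w i k = 1.
Proof.
rewrite (eq_bigr (fun k => Jnum E w i k / sigma_max E w)) // -mulr_suml.
by rewrite Jnum_row_sum divff // sigma_neq0.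
Qed.

Lemma Jbar_neq0 i j : (Jbar E w i j != 0) = (j \in Ktilde E) && reach E j i.
Proof.
rewrite JbarE mulf_eq0 invr_eq0 (negPf (sigma_neq0 (subxx E))) orbF.
exact: Jnum_neq0 w_pos i j.
Qed.

Section Bicomponent.
Variable K : {set V}.
Hypothesis HK : basis_bicomp E K.
Local Notation E' := (minusK E K).

Lemma Jbar_decomp j i : j \in K ->
  Jbar E w i j = epsTj E w K j * epsP E w K i / sigma_max E w.
Proof. by move=> jK; rewrite JbarE (Jnum_decomp w HK). Qed.

Lemma Jbar_full j i : j \in K -> (i \in K) || (i \in Kplus E K) ->
  Jbar E w i j = epsTj E w K j * sigma_max E' w / sigma_max E w.
Proof. by move=> jK iK; rewrite Jbar_decomp // (epsP_full w HK). Qed.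

Lemma sigma_factor : sigma_max E w = epsT E w K * sigma_max E' w.
Proof.
rewrite (sigma_basis w HK) (epsT_sum E w K) mulr_suml; apply: eq_bigr => j jK.
by rewrite (Jnum_decomp w HK) // (epsP_full w HK) // jK.
Qed.

Lemma Jbar_diag j : j \in K -> Jbar E w j j = epsTj E w K j / epsT E w K.
Proof.
move=> jK; rewrite Jbar_full ?jK // sigma_factor invfM mulrACA divff ?mulr1 //.
exact/sigma_neq0/minusK_sub.
Qed.

Lemma Jbar_diag_sum : \sum_(j in K) Jbar E w j j = 1.
Proof.
rewrite (eq_bigr (fun j => Jnum E w j j / sigma_max E w)) // -mulr_suml.
by rewrite -(sigma_basis w HK) divff // sigma_neq0.
Qed.

Lemma Jbar_col_ratio j1 j2 i : j1 \in K -> j2 \in K ->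
  Jbar E w i j2 = epsTj E w K j2 / epsTj E w K j1 * Jbar E w i j1.
Proof.
move=> j1K j2K; rewrite !Jbar_decomp //.
by rewrite [in RHS]mulrA [in RHS](mulrA (_ / _)) divfK // (epsTj_neq0 w_pos HK).
Qed.

End Bicomponent.

Lemma Jbar_undominated j : undominated E j -> Jbar E w j j = 1.
Proof. by move=> jund; have := Jbar_diag_sum jund; rewrite big_set1. Qed.

End Claims.

Theorem theorem2 (R : realFieldType) (n : nat) (E : {set 'I_n * 'I_n})
    (w : 'I_n -> 'I_n -> R)
    (Hloop : forall a, a \in E -> a.1 != a.2)
    (Hw : forall a, a \in E -> 0 < w a.1 a.2) :
  (* (1) row stochastic *)
  ((forall i j, 0 <= Jbar E w i j) /\ (forall i, \sum_(k < n) Jbar E w i k = 1)) /\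
  (* (2) support *)
  (forall i j, Jbar E w i j != 0 <-> (j \in Ktilde E /\ reach E j i)) /\
  (forall K : {set 'I_n}, basis_bicomp E K ->
    (* (3) *)
    (forall j, j \in K ->
       (forall i, Jbar E w i j
                  = epsTj E w K j * epsP E w K i / sigma_max E w) /\
       (forall i, i \in Kplus E K ->
          Jbar E w i j = Jbar E w j j /\ Jbar E w j j = epsTj E w K j / epsT E w K)) /\
    (* (4) *)
    \sum_(j in K) Jbar E w j j = 1 /\
    (* (5) *)
    (forall j1 j2, j1 \in K -> j2 \in K ->
       forall i, Jbar E w i j2 = epsTj E w K j2 / epsTj E w K j1 * Jbar E w i j1)) /\
  (* (4), undominated vertices *)
  (forall j, undominated E j -> Jbar E w j j = 1).
Proof.
split; first by split=> [i j|i]; [exact (Jbar_ge0 Hw i j) | exact (Jbar_row_sum Hw i)].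
split; first by move=> i j; rewrite (Jbar_neq0 Hw); split=> [/andP[]|[-> ->]].
split; last by move=> j jund; exact (Jbar_undominated Hw jund).
move=> K HK; split; last split.
- move=> j jK; split=> [i|i iKp]; first exact (Jbar_decomp w HK i jK).
  split; last exact (Jbar_diag Hw HK jK).
  by rewrite !(Jbar_full w HK) ?jK ?iKp ?orbT.
- exact (Jbar_diag_sum Hw HK).
- by move=> j1 j2 j1K j2K i; exact (Jbar_col_ratio Hw HK i j1K j2K).
Qed.
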